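(* Let $K\subset\mathbb{R}^n$ be a convex body with smooth boundary and let $\gamma:S^1\to\mathbb{R}^n$ be a piecewise linear closed curve. If there exists $\mathcal{N}\subset\mathbb{R}^n\setminus\{0\}$ such that $0\in\mathrm{conv}(\mathcal{N})$ and $h(K:\nu)\le h(\gamma(S^1):\nu)$ for every $\nu\in\mathcal{N}$, then $\gamma\in\mathcal{P}^+(K)$.
   Context: A convex body is a compact convex set with nonempty interior; $S^1=\mathbb{R}/\mathbb{Z}$. For compact $S\subset\mathbb{R}^n$ and $\nu\in\mathbb{R}^n$, $h(S:\nu)=\max\{s\cdot\nu:s\in S\}$. $\mathcal{P}^+(K)$ is the set of piecewise linear closed curves $\gamma:S^1\to\mathbb{R}^n$ such that $\gamma(S^1)+x\not\subset\mathrm{int}\,K$ for every $x\in\mathbb{R}^n$. $\mathrm{conv}$ denotes convex hull. *)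

From HB Require Import structures.
From mathcomp Require Import all_boot all_order all_algebra.
From mathcomp Require Import all_classical all_reals all_analysis.
Set Implicit Arguments. Unset Strict Implicit. Unset Printing Implicit Defensive.
Import Order.TTheory GRing.Theory Num.Theory.
Import numFieldNormedType.Exports.
Local Open Scope classical_set_scope.
Local Open Scope ring_scope.

Section Defs.
Variables (R : realType) (n : nat).
Local Notation V := 'rV[R]_n.

Definition dotv (x y : V) : R := \sum_(i < n) x ord0 i * y ord0 i.

(* h(S : nu) = max { s . nu : s in S } (the max, when it exists, is the sup) *)
Definition supp_fun (S : set V) (nu : V) : R := sup [set dotv s nu | s in S].

Definition convex_setv (K : set V) : Prop :=
  forall x y t, K x -> K y -> 0 <= t -> t <= 1 -> K ((1 - t) *: x + t *: y).

Definition convex_body (K : set V) : Prop :=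
  [/\ compact K, convex_setv K & interior K !=set0].

Fixpoint iter_dirderiv (vs : seq V) (f : V -> R) : V -> R :=
  match vs with
  | [::] => f
  | v :: vs' => fun x => 'D_v (iter_dirderiv vs' f) x
  end.

Definition smooth_fun (f : V -> R) : Prop :=
  forall vs : seq V,
    continuous (iter_dirderiv vs f) /\
    (forall x v, derivable (iter_dirderiv vs f) x v).

Definition smooth_boundary (K : set V) : Prop :=
  forall p, K p -> ~ interior K p ->
    exists f : V -> R, [/\ smooth_fun f, f p = 0,
      (exists v : V, 'D_v f p != 0) &
      exists2 e : R, 0 < e & forall y, ball p e y -> (K y <-> f y <= 0)].

Definition conv_hull (N : set V) : set V :=
  [set x | exists m (c : 'I_m -> R) (p : 'I_m -> V),
     [/\ forall i, 0 <= c i, \sum_(i < m) c i = 1, forall i, N (p i)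
       & x = \sum_(i < m) c i *: p i]].

(* S^1 = R/Z: a closed curve is a 1-periodic map R -> R^n; gamma(S^1) = range gamma.
   Piecewise linear: a partition 0 = t_0 < ... < t_m = 1 with gamma affine on each
   [t_i, t_{i+1}] (continuity then follows). *)
Definition pl_closed_curve (g : R -> V) : Prop :=
  (forall t, g (t + 1) = g t) /\
  exists (m : nat) (ts : nat -> R),
    [/\ ts 0%N = 0, ts m = 1, (forall i, (i < m)%N -> ts i < ts i.+1) &
      forall i, (i < m)%N -> exists u w : V,
        forall t, ts i <= t -> t <= ts i.+1 -> g t = u + t *: w].

Definition Pplus (K : set V) (g : R -> V) : Prop :=
  pl_closed_curve g /\
  forall x : V, ~ ([set y + x | y in range g] `<=` interior K).

End Defs.

From HB Require Import structures.
From mathcomp Require Import all_boot all_order all_algebra.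
From mathcomp Require Import all_classical all_reals all_analysis.
From mathcomp Require Import lra.
Set Implicit Arguments. Unset Strict Implicit. Unset Printing Implicit Defensive.
Import Order.TTheory GRing.Theory Num.Theory.
Import numFieldNormedType.Exports.
Local Open Scope classical_set_scope.
Local Open Scope ring_scope.

(* If gamma(S^1) + x lay in int K, then for every nu in N, attained at gamma(t),
   h(K:nu) <= gamma(t).nu < h(K:nu) - x.nu since gamma(t) + x is interior, so
   x.nu < 0 on all of N; this is impossible because 0 is a convex combination
   of elements of N. *)

Section InnerProduct.
Variables (R : realType) (n : nat).
Implicit Types (x y z v : 'rV[R]_n).

Lemma dotvDl x y z : dotv (x + y) z = dotv x z + dotv y z.
Proof. by rewrite /dotv -big_split; apply: eq_bigr => i _; rewrite mxE mulrDl. Qed.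

Lemma dotvZl (a : R) x z : dotv (a *: x) z = a * dotv x z.
Proof. by rewrite /dotv mulr_sumr; apply: eq_bigr => i _; rewrite mxE mulrA. Qed.

Lemma dotv0r x : dotv x 0 = 0.
Proof. by rewrite /dotv big1 // => i _; rewrite mxE mulr0. Qed.

Lemma dotv_sumr m x (c : 'I_m -> R) (p : 'I_m -> 'rV[R]_n) :
  dotv x (\sum_(i < m) c i *: p i) = \sum_(i < m) c i * dotv x (p i).
Proof.
rewrite /dotv; under eq_bigr => k _ do rewrite summxE mulr_sumr.
rewrite exchange_big; apply: eq_bigr => i _; rewrite mulr_sumr.
by apply: eq_bigr => k _; rewrite mxE mulrCA.
Qed.

Lemma dotvv_gt0 v : v != 0 -> 0 < dotv v v.
Proof.
move=> v0; have [k vk] : exists k, v ord0 k != 0.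
  apply/not_existsP => v_eq0; move/eqP: v0; apply; apply/matrixP => i j.
  by rewrite (ord1 i) mxE; apply/eqP/negPn/negP/v_eq0.
rewrite /dotv (bigD1 k) //= ltr_pwDl ?lt_def ?sqr_ge0 ?sqrf_eq0 ?vk //.
by apply: sumr_ge0 => i _; rewrite -expr2 sqr_ge0.
Qed.

Lemma dotv_le_norm x v : dotv x v <= `|x| * \sum_(k < n) `|v ord0 k|.
Proof.
rewrite /dotv mulr_sumr; apply: ler_sum => k _.
rewrite (le_trans (ler_norm _)) // normrM ler_wpM2r //.
have -> : `|x| = mx_norm x by [].
rewrite mx_normrE.
exact: (le_bigmax 0 (fun ij : 'I_1 * 'I_n => `|x ij.1 ij.2|) (ord0, k)).
Qed.

End InnerProduct.

Section SupportFunction.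
Variables (R : realType) (n : nat).
Implicit Types (S : set 'rV[R]_n) (s y v : 'rV[R]_n).

Lemma supp_funE S s v :
  S s -> (forall t, S t -> dotv t v <= dotv s v) -> supp_fun S v = dotv s v.
Proof.
move=> Ss s_max; have ub : ubound [set dotv t v | t in S] (dotv s v).
  by move=> _ [t St <-]; exact: s_max.
apply/eqP; rewrite eq_le; apply/andP; split.
  by apply: ge_sup => //; exists (dotv s v), s.
by apply: ub_le_sup; [exists (dotv s v) | exists s].
Qed.

Lemma bounded_dotv_ubound S v :
  bounded_set S -> has_ubound [set dotv s v | s in S].
Proof.
move=> [M [_ SM]]; exists ((M + 1) * \sum_(k < n) `|v ord0 k|) => _ [s Ss <-].
rewrite (le_trans (dotv_le_norm s v)) // ler_wpM2r ?sumr_ge0 //.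
by apply: SM => //; lra.
Qed.

(* Push y a little in direction v while staying in S. *)
Lemma interior_dotv_lt_supp_fun S y v :
  bounded_set S -> interior S y -> v != 0 -> dotv y v < supp_fun S v.
Proof.
move=> bS /nbhs_ballP [e /= e0 yeS] v0.
have nv : 0 < `|v| by rewrite normr_gt0.
pose eps := e / (2 * `|v|).
have eps0 : 0 < eps by rewrite divr_gt0 // mulr_gt0.
have Sy' : S (y + eps *: v).
  apply: yeS; rewrite -ball_normE /ball_ /= opprD addrA subrr add0r normrN.
  rewrite normrZ gtr0_norm // /eps invfM -!mulrA mulVf ?gt_eqF // mulr1.
  lra.
have y'_le : dotv (y + eps *: v) v <= supp_fun S v.
  by apply: ub_le_sup; [exact: bounded_dotv_ubound | exists (y + eps *: v)].
by rewrite (lt_le_trans _ y'_le) // dotvDl dotvZl ltrDl mulr_gt0 ?dotvv_gt0.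
Qed.

End SupportFunction.

Lemma conv_hull0_dotv_ge0 (R : realType) (n : nat) (N : set 'rV[R]_n) x :
  conv_hull N 0 -> exists2 p, N p & 0 <= dotv x p.
Proof.
move=> [m [c [p [c_ge0 c_sum1 Np hull0]]]].
apply: contrapT => /forall2NP x_neg.
have {}x_neg i : dotv x (p i) < 0.
  by case: (x_neg (p i)) => // /negP; rewrite -ltNge.
have [k ck] : exists k, 0 < c k.
  apply: contrapT => /forallNP c_le0; move: (@ltr01 R).
  by rewrite -c_sum1 ltNge sumr_le0 // => i _; rewrite leNgt; apply/negP/c_le0.
have : dotv x 0 < 0.
  rewrite hull0 dotv_sumr (bigD1 k) //=.
  rewrite ltr_wnDr ?pmulr_rlt0 // sumr_le0 // => i _.
  by rewrite mulr_ge0_le0 // ltW.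
by rewrite dotv0r ltxx.
Qed.

Section PiecewiseLinearCurve.
Variables (R : realType) (n : nat).

Lemma affine_le_max (a b s c d : R) :
  a <= s -> s <= b -> c + s * d <= Num.max (c + a * d) (c + b * d).
Proof.
move=> a_s s_b; rewrite le_max !lerD2l.
case: (lerP 0 d) => d0; first by rewrite (ler_wpM2r d0 s_b) orbT.
by rewrite (ler_wnM2r (ltW d0) a_s).
Qed.

Lemma bracket_point (ts : nat -> R) m y :
  (0 < m)%N -> ts 0%N <= y <= ts m -> exists2 i, (i < m)%N & ts i <= y <= ts i.+1.
Proof.
elim: m => [//|m IH _ /andP [y0 y_le]].
have [m0 | m_gt0] := posnP m; first by subst m; exists 0%N; rewrite ?y0.
case: (lerP y (ts m)) => [y_le_m | lt_y]; last by exists m; rewrite ?(ltW lt_y).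
by have [|i im iy] := IH m_gt0; [rewrite y0 | exists i => //; exact: ltnW].
Qed.

Lemma periodic_intr (g : R -> 'rV[R]_n) :
  (forall t, g (t + 1) = g t) -> forall t (z : int), g (t + z%:~R) = g t.
Proof.
move=> g1 t; have gnat (k : nat) s : g (s + k%:R) = g s.
  by elim: k => [|k IH]; rewrite ?addr0 // -natr1 addrA g1.
case=> k; first by rewrite -pmulrn gnat.
by rewrite NegzE mulrNz -{2}(subrK (k.+1%:~R) t) -pmulrn gnat.
Qed.

(* The maximum is taken at a break point, the functional being affine on each piece. *)
Lemma pl_closed_curve_dotv_max (g : R -> 'rV[R]_n) v :
  pl_closed_curve g -> exists t, forall t', dotv (g t') v <= dotv (g t) v.
Proof.
move=> [g1 [m [ts [ts0 tsm ts_incr g_affine]]]].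
have m_gt0 : (0 < m)%N.
  by case: m tsm {ts_incr g_affine} => // /esym/eqP; rewrite ts0 oner_eq0.
pose f t := dotv (g t) v.
have [j _ j_max] := arg_maxP (fun j : 'I_m.+1 => f (ts j)) (isT : predT ord0).
exists (ts j) => t; have ft1 : t < (Num.floor t)%:~R + 1.
  by rewrite -[1 in X in _ < X]/(1%:~R : R) -intrD floorD1_gt.
pose y := t - (Num.floor t)%:~R.
suff : f y <= f (ts j) by rewrite /f -(periodic_intr g1 y (Num.floor t)) subrK.
have y01 : ts 0%N <= y <= ts m.
  by rewrite ts0 tsm subr_ge0 floor_le lerBlDl (ltW ft1).
have [i im /andP [iy yi]] := bracket_point m_gt0 y01.
have [u [w gi]] := g_affine i im.
have fi s : ts i <= s -> s <= ts i.+1 -> f s = dotv u v + s * dotv w v.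
  by move=> ? ?; rewrite /f gi // dotvDl dotvZl.
have ts_le : ts i <= ts i.+1 by exact: ltW (ts_incr i im).
rewrite [f y]fi // (le_trans (affine_le_max _ _ iy yi)) //.
rewrite -fi // -fi // ge_max.
apply/andP; split; first exact: (j_max (@Ordinal m.+1 i (ltnW im)) isT).
exact: (j_max (@Ordinal m.+1 i.+1 im) isT).
Qed.

End PiecewiseLinearCurve.

Theorem lemma6p1 (R : realType) (n : nat) (K : set 'rV[R]_n) (g : R -> 'rV[R]_n)
  (N : set 'rV[R]_n) :
  convex_body K -> smooth_boundary K -> pl_closed_curve g ->
  N `<=` [set v | v != 0] -> conv_hull N 0 ->
  (forall nu, N nu -> supp_fun K nu <= supp_fun (range g) nu) ->
  Pplus K g.
Proof.
move=> [cK _ _] _ gPL N_neq0 hull0 hK_le_hg; split => // x gx_int.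
have [nu Nnu x_nu] := conv_hull0_dotv_ge0 x hull0.
have [t t_max] := pl_closed_curve_dotv_max nu gPL.
have hg : supp_fun (range g) nu = dotv (g t) nu.
  by apply: supp_funE => [|_ [t' _ <-]]; [exists t | exact: t_max].
have gtx_int : interior K (g t + x) by apply: gx_int; exists (g t) => //; exists t.
have := interior_dotv_lt_supp_fun (compact_bounded cK) gtx_int (N_neq0 _ Nnu).
have := hK_le_hg _ Nnu; rewrite hg dotvDl; lra.
Qed.
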